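(* Let $Q$ be a subfield of $\mathbb{R}$, let $R = Q \times Q$ with coordinatewise addition and multiplication $(a,b)\cdot(c,d) = (ac, ad + bc)$, and consider the Frobenius template $(A(Q), C(Q), U(Q))$ in $R$, where $A(Q) = (Q \cap (0,\infty)) \times (Q \cap [0,\infty))$ and $C(Q) = U(Q) = (Q \cap [0,\infty))^2$. Let $n$ be a positive integer and let $(\alpha_1, \dots, \alpha_n)$ be a list of elements $\alpha_i = (a_i, b_i) \in A(Q)$ with $b_1 = 0$. Then $\mathrm{Frob}(\alpha_1, \dots, \alpha_n) = MN(\alpha_1, \dots, \alpha_n) = U(Q)$.
   Context: For a list $(\alpha_1,\dots,\alpha_n)$ in $A(Q)$, $MN(\alpha_1, \dots, \alpha_n) = \{\sum_{i=1}^n \alpha_i \lambda_i : \lambda_1, \dots, \lambda_n \in C(Q)\}$ (product in $R$), and $\mathrm{Frob}(\alpha_1, \dots, \alpha_n) = \{w \in R : w + U(Q) \subseteq MN(\alpha_1, \dots, \alpha_n)\}$, where $w + U(Q) = \{w + u : u \in U(Q)\}$. *)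

From HB Require Import structures.
From mathcomp Require Import all_boot all_order all_algebra.
From mathcomp Require Import reals.
Set Implicit Arguments. Unset Strict Implicit. Unset Printing Implicit Defensive.
Import Order.TTheory GRing.Theory Num.Theory.
Local Open Scope ring_scope.

Section Template.
Variables (R : realType) (Q : {pred R}).

Definition inRQ (x : R * R) : Prop := x.1 \in Q /\ x.2 \in Q.

Definition rqmul (x y : R * R) : R * R := (x.1 * y.1, x.1 * y.2 + x.2 * y.1).
Definition rqadd (x y : R * R) : R * R := (x.1 + y.1, x.2 + y.2).
Definition rqsum (n : nat) (f : 'I_n -> R * R) : R * R :=
  (\sum_(i < n) (f i).1, \sum_(i < n) (f i).2).

Definition AQ (x : R * R) : Prop := [/\ x.1 \in Q, 0 < x.1, x.2 \in Q & 0 <= x.2].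
Definition CQ (x : R * R) : Prop := [/\ x.1 \in Q, 0 <= x.1, x.2 \in Q & 0 <= x.2].
Definition UQ (x : R * R) : Prop := [/\ x.1 \in Q, 0 <= x.1, x.2 \in Q & 0 <= x.2].

Definition MN (n : nat) (alpha : 'I_n -> R * R) (w : R * R) : Prop :=
  exists lambda : 'I_n -> R * R,
    (forall i, CQ (lambda i)) /\ w = rqsum (fun i => rqmul (alpha i) (lambda i)).

Definition Frob (n : nat) (alpha : 'I_n -> R * R) (w : R * R) : Prop :=
  inRQ w /\ forall u, UQ u -> MN alpha (rqadd w u).

End Template.

(** The scalar (a, 0) with a > 0 in Q is invertible in R, with inverse
    (1/a, 0) in C(Q), so every w in U(Q) is (a, 0) * (w/a): already the first
    generator alone reaches all of U(Q).  Conversely A(Q) * C(Q) lies in U(Q)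
    and U(Q) is additively closed, so MN = U(Q); closure of U(Q) under
    addition also gives w + U(Q) inside U(Q) = MN for every w in MN, which
    is Frob = MN. *)
From HB Require Import structures.
From mathcomp Require Import all_boot all_order all_algebra.
From mathcomp Require Import reals.
Set Implicit Arguments. Unset Strict Implicit. Unset Printing Implicit Defensive.
Import Order.TTheory GRing.Theory Num.Theory.
Local Open Scope ring_scope.

Section FrobeniusTemplate.
Variables (R : realType) (Q : {pred R}).
Hypothesis hQ : GRing.divring_closed Q.
HB.instance Definition _ := GRing.isDivringClosed.Build R Q hQ.

Lemma AQ_CQ (x : R * R) : AQ Q x -> CQ Q x.
Proof. by case=> *; split=> //; apply: ltW. Qed.

Lemma CQ_rqmul (x y : R * R) : CQ Q x -> CQ Q y -> CQ Q (rqmul x y).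
Proof.
case=> Qx1 x1_ge0 Qx2 x2_ge0 [Qy1 y1_ge0 Qy2 y2_ge0].
by split; rewrite /= ?rpredD ?rpredM ?addr_ge0 ?mulr_ge0.
Qed.

Lemma CQ_rqadd (x y : R * R) : CQ Q x -> CQ Q y -> CQ Q (rqadd x y).
Proof.
case=> Qx1 x1_ge0 Qx2 x2_ge0 [Qy1 y1_ge0 Qy2 y2_ge0].
by split; rewrite /= ?rpredD ?addr_ge0.
Qed.

Lemma CQ_rqsum (n : nat) (f : 'I_n -> R * R) :
  (forall i, CQ Q (f i)) -> CQ Q (rqsum f).
Proof.
move=> CQf; split; rewrite /= ?rpred_sum ?sumr_ge0 // => i _;
  by case: (CQf i).
Qed.

Lemma MN_UQ (n : nat) (alpha : 'I_n -> R * R) (w : R * R) :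
  (forall i, AQ Q (alpha i)) -> MN Q alpha w -> UQ Q w.
Proof.
move=> AQalpha [lambda [CQlambda ->]].
by apply: CQ_rqsum => i; apply: CQ_rqmul; [apply: AQ_CQ | apply: CQlambda].
Qed.

Lemma rqsum_supp1 (n : nat) (f : 'I_n -> R * R) (i0 : 'I_n) :
  (forall j, j != i0 -> f j = (0, 0)) -> rqsum f = f i0.
Proof.
move=> f_supp; rewrite /rqsum (bigD1 i0) //= [X in (_, X)](bigD1 i0) //=.
rewrite !big1 ?addr0 -1?surjective_pairing // => j /f_supp -> //.
Qed.

Lemma rqmul_scalarK (a : R) (w : R * R) :
  a != 0 -> rqmul (a, 0) (w.1 / a, w.2 / a) = w.
Proof.
by move=> a_neq0; rewrite /rqmul /= mul0r addr0 ![a * _]mulrC !divfK // -surjective_pairing.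
Qed.

Lemma UQ_MN (n : nat) (alpha : 'I_n -> R * R) (i0 : 'I_n) (w : R * R) :
  AQ Q (alpha i0) -> (alpha i0).2 = 0 -> UQ Q w -> MN Q alpha w.
Proof.
move=> [Qa a_gt0 _ _] alpha_i0_2 [Qw1 w1_ge0 Qw2 w2_ge0].
have alpha_i0E : alpha i0 = ((alpha i0).1, 0) by rewrite -alpha_i0_2 -surjective_pairing.
set a := (alpha i0).1 in Qa a_gt0 alpha_i0E.
have a_ge0 := ltW a_gt0.
exists (fun j => if j == i0 then (w.1 / a, w.2 / a) else (0, 0)); split.
  move=> j; case: eqP => _; split; rewrite /= ?rpred0 ?rpred_div ?divr_ge0 //.
rewrite (@rqsum_supp1 _ _ i0) => [|j /negbTE ->]; last by rewrite /rqmul /= !mulr0 addr0.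
by rewrite eqxx alpha_i0E rqmul_scalarK ?gt_eqF.
Qed.

Lemma Frob_MN (n : nat) (alpha : 'I_n -> R * R) (w : R * R) :
  Frob Q alpha w -> MN Q alpha w.
Proof.
case=> _ /(_ (0, 0)); rewrite /rqadd !addr0 -surjective_pairing; apply.
by split; rewrite ?rpred0.
Qed.

Lemma UQ_Frob (n : nat) (alpha : 'I_n -> R * R) (w : R * R) :
  (forall v, UQ Q v -> MN Q alpha v) -> UQ Q w -> Frob Q alpha w.
Proof.
move=> UQ_sub_MN UQw; split; first by case: UQw.
by move=> u UQu; apply/UQ_sub_MN/CQ_rqadd.
Qed.

End FrobeniusTemplate.

Theorem proposition4p2 (R : realType) (Q : {pred R})
  (hQ : GRing.divring_closed Q)
  (n : nat) (hn : (0 < n)%N) (alpha : 'I_n -> R * R)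
  (hA : forall i, AQ Q (alpha i))
  (hb1 : forall i : 'I_n, nat_of_ord i = 0%N -> (alpha i).2 = 0) :
  (forall w, Frob Q alpha w <-> MN Q alpha w) /\
  (forall w, MN Q alpha w <-> UQ Q w).
Proof.
pose i0 : 'I_n := Ordinal hn.
have MN_iff_UQ w : MN Q alpha w <-> UQ Q w.
  split; first exact: (MN_UQ hQ hA).
  by apply: (UQ_MN hQ (hA i0)); apply: hb1.
split=> w; last exact: MN_iff_UQ.
split; first exact: (Frob_MN hQ).
by move/MN_iff_UQ; apply: (UQ_Frob hQ) => v /MN_iff_UQ.
Qed.
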